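(* Let $\{(\iota_1,z_1^* ),\dots,(\iota_J,z_J^* )\}$ be minimally degenerate. Then: (1) $\ker A^*$ is one-dimensional and there is a unique $\vec{\mathfrak c}\in(0,\infty)^J$ with $|\vec{\mathfrak c}|=1$ and $\ker A^*=\mathbb{R}\vec{\mathfrak c}$; (2) $\big|\frac{\vec\ell}{|\vec\ell|}-\vec{\mathfrak c}\big|\simeq\frac{|A^*\vec\ell|}{|\vec\ell|}$ for every $0\ne\vec\ell\in[0,\infty)^J$; (3) for any $\delta_1>0$ and $\vec\lambda\in(0,\infty)^J$ with $\lambda_{\mathrm{max2}}\ge\delta_1\lambda_{\max}$, $\sum_{i=1}^J\lambda_i^{2D-2}(A^*\vec\lambda^D)_i^2\simeq_{\delta_1}\lambda_{\max}^{2D-2}|A^*\vec\lambda^D|^2$.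
   Context: $N\ge7$, $D=\frac{N-2}2$; $\iota_i\in\{\pm1\}$ and distinct $z_i^*\in\mathbb{R}^N$. $A^*_{ij}=\mathbf 1_{i\ne j}\kappa_0\kappa_\infty\frac{\iota_i\iota_j}{|z_i^*-z_j^*|^{N-2}}$ with fixed positive constants $\kappa_0,\kappa_\infty$. A configuration is degenerate if $A^*$ has a nonzero kernel element in $[0,\infty)^J$; minimally degenerate if it is degenerate while every proper sub-configuration of size $\ge2$ (using the corresponding submatrix) is non-degenerate. $\vec\lambda^D=(\lambda_i^D)_i$; $\lambda_{\max}$, $\lambda_{\mathrm{max2}}$ largest and second largest $\lambda_i$. Implicit constants depend on the configuration (and $\delta_1$ where indicated). *)

From HB Require Import structures.
From mathcomp Require Import all_boot all_order all_algebra.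
From mathcomp Require Import reals exp.
Set Implicit Arguments. Unset Strict Implicit. Unset Printing Implicit Defensive.
Import Order.TTheory GRing.Theory Num.Theory.
Local Open Scope ring_scope.

Definition enorm (R : realType) (m n : nat) (M : 'M[R]_(m, n)) : R :=
  Num.sqrt (\sum_(i < m) \sum_(j < n) M i j ^+ 2).

Definition Dexp (R : realType) (N : nat) : R := (N%:R - 2) / 2.

Definition Astar (R : realType) (N J : nat) (k0 kinf : R)
  (iota : 'I_J -> R) (z : 'I_J -> 'rV[R]_N) : 'M[R]_J :=
  \matrix_(i, j) (if i == j then 0
     else k0 * kinf * iota i * iota j / (enorm (z i - z j)) ^+ (N - 2)).

Definition degenerate_mx (R : realType) (n : nat) (M : 'M[R]_n) : Prop :=
  exists v : 'cV[R]_n, v != 0 /\ (forall i, 0 <= v i 0) /\ M *m v = 0.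

Definition subcfg_mx (R : realType) (n : nat) (M : 'M[R]_n) (S : {set 'I_n})
  : 'M[R]_#|S| :=
  \matrix_(a, b) M (@enum_val _ (mem S) a) (@enum_val _ (mem S) b).

Definition minimally_degenerate (R : realType) (n : nat) (M : 'M[R]_n) : Prop :=
  degenerate_mx M /\
  forall S : {set 'I_n}, (2 <= #|S|)%N -> (#|S| < n)%N ->
    ~ degenerate_mx (subcfg_mx M S).

(* largest and second largest entries (with multiplicity) *)
Definition lmax (R : realType) (n : nat) (l : 'cV[R]_n) : R :=
  \big[Num.max/0]_(i < n) l i 0.
Definition lmax2 (R : realType) (n : nat) (l : 'cV[R]_n) : R :=
  nth 0 (sort (fun x y : R => y <= x) [seq l i 0 | i <- enum 'I_n]) 1.

Definition vpow (R : realType) (n : nat) (l : 'cV[R]_n) (p : R) : 'cV[R]_n :=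
  \col_i powR (l i 0) p.

(* Minimal degeneracy, together with the nonvanishing off-diagonal entries of
   A, forces every nonnegative kernel vector of A to be positive, so the kernel
   is the line through a positive unit vector c.  For (2), a nonnegative unit
   vector u lies within O(|A u|) of some s c, since A is bounded below off its
   kernel, and |u - c| <= 2 |u - s c| because u and c are nonnegative unit
   vectors.  For (3), a Gordan-type induction shows |u|_1 <= C |M u|_1 for
   nonnegative u whenever M has no nonzero nonnegative kernel vector.  Applied
   to the sub-configuration L = {i : lambda_i >= eta lambda_max}, which has at
   least two points, it shows that the entries of A lambda^D indexed by L carry
   a fixed fraction of its norm; on L the weights lambda_i^(2D-2) are
   comparable to lambda_max^(2D-2). *)

From HB Require Import structures.
From mathcomp Require Import all_boot all_order all_algebra.
From mathcomp Require Import boolp reals exp ring lra.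
Import Order.TTheory GRing.Theory Num.Theory.
Local Open Scope ring_scope.

Section NonnegCoercivity.
Context {R : realFieldType}.

Definition norm1 {n : nat} (v : 'cV[R]_n) : R := \sum_i `|v i 0|.
Definition mxnorm1 {m n : nat} (M : 'M[R]_(m, n)) : R := \sum_i \sum_j `|M i j|.
Definition nonneg {n : nat} (v : 'cV[R]_n) : Prop := forall i, 0 <= v i 0.
Definition supported {n : nat} (v : 'cV[R]_n) (S : {set 'I_n}) : Prop :=
  forall i, i \notin S -> v i 0 = 0.
Definition mask {n : nat} (S : {set 'I_n}) (v : 'cV[R]_n) : 'cV[R]_n :=
  \col_i (if i \in S then v i 0 else 0).
Definition maskmx {n : nat} (S : {set 'I_n}) : 'M[R]_n :=
  \matrix_(i, j) ((i == j) && (i \in S))%:R.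

Lemma ler_sum_term {I : finType} (F : I -> R) i :
  (forall j, 0 <= F j) -> F i <= \sum_j F j.
Proof. by move=> F_ge0; rewrite (bigD1 i) //= lerDl sumr_ge0. Qed.

Lemma norm1_ge0 {n : nat} (v : 'cV[R]_n) : 0 <= norm1 v.
Proof. exact: sumr_ge0. Qed.

Lemma mxnorm1_ge0 {m n : nat} (M : 'M[R]_(m, n)) : 0 <= mxnorm1 M.
Proof. by apply: sumr_ge0 => i _; apply: sumr_ge0. Qed.

Lemma norm1B {n : nat} (u v : 'cV[R]_n) : norm1 (u - v) <= norm1 u + norm1 v.
Proof.
rewrite /norm1 -big_split /=; apply: ler_sum => i _.
by rewrite !mxE -(normrN (v i 0)) ler_normD.
Qed.

Lemma norm1_mul {m n : nat} (M : 'M[R]_(m, n)) (v : 'cV[R]_n) :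
  norm1 (M *m v) <= mxnorm1 M * norm1 v.
Proof.
rewrite /norm1 /mxnorm1 mulr_suml; apply: ler_sum => i _; rewrite mxE.
apply: le_trans (ler_norm_sum _ _ _) _; rewrite mulr_suml; apply: ler_sum => j _.
by rewrite normrM ler_wpM2l // (ler_sum_term (fun k => `|v k 0|)).
Qed.

Lemma norm1_le_const {n : nat} (v : 'cV[R]_n) (b : R) :
  (forall i, `|v i 0| <= b) -> norm1 v <= n%:R * b.
Proof.
by move=> le_b; rewrite mulr_natl -[n in _ *+ n]card_ord -sumr_const; apply: ler_sum.
Qed.

Lemma norm1_nonneg {n : nat} (u : 'cV[R]_n) : nonneg u -> norm1 u = \sum_i u i 0.
Proof. by move=> u_ge0; apply: eq_bigr => i _; rewrite ger0_norm. Qed.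

Lemma mask_supported {n : nat} (S : {set 'I_n}) (v : 'cV[R]_n) : supported (mask S v) S.
Proof. by move=> i /negPf iNS; rewrite mxE iNS. Qed.

Lemma mask_id {n : nat} (S : {set 'I_n}) (v : 'cV[R]_n) : supported v S -> mask S v = v.
Proof.
move=> vS; apply/matrixP => i j; rewrite mxE (ord1 j).
by case: ifP => // /negbT /vS ->.
Qed.

Lemma maskB {n : nat} (S : {set 'I_n}) (u v : 'cV[R]_n) :
  mask S (u - v) = mask S u - mask S v.
Proof. by apply/matrixP => i j; rewrite !mxE; case: ifP; rewrite ?subr0. Qed.

Lemma norm1_mask {n : nat} (S : {set 'I_n}) (v : 'cV[R]_n) : norm1 (mask S v) <= norm1 v.
Proof. by apply: ler_sum => i _; rewrite mxE; case: ifP; rewrite ?normr0. Qed.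

Lemma mul_maskmx {n : nat} (S : {set 'I_n}) (v : 'cV[R]_n) : maskmx S *m v = mask S v.
Proof.
apply/matrixP => i j; rewrite !mxE (ord1 j) (bigD1 i) //= big1 ?addr0.
  by rewrite mxE eqxx /=; case: (i \in S); rewrite ?mul1r ?mul0r.
by move=> k /negPf ki; rewrite mxE eq_sym ki mul0r.
Qed.

Lemma uniform_constant {T : finType} {P : T -> R -> Prop} :
  (forall x C C', C <= C' -> P x C -> P x C') ->
  (forall x, exists2 C, 0 <= C & P x C) -> exists2 C, 0 <= C & forall x, P x C.
Proof.
move=> P_mono P_ex.
have /choice[f f_ok] : forall x, exists C, 0 <= C /\ P x C.
  by move=> x; have [C ? ?] := P_ex x; exists C.
have f_ge0 x : 0 <= f x by case: (f_ok x).
exists (\sum_x f x) => [|x]; first exact: sumr_ge0.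
by apply: P_mono (ler_sum_term f x f_ge0) _; case: (f_ok x).
Qed.

(* [u - k] is the image of [M u] under a fixed partial inverse of [M]. *)
Lemma kernel_approx {m n : nat} (M : 'M[R]_(m, n)) :
  exists2 C, 0 <= C & forall u,
    exists2 k, M *m k = 0 & norm1 (u - k) <= C * norm1 (M *m u).
Proof.
pose P := pinvmx M^T; exists (mxnorm1 P^T) => [|u]; first exact: mxnorm1_ge0.
pose x := (u^T *m M^T *m P)^T.
have Mx : M *m x = M *m u.
  apply: trmx_inj; rewrite !trmx_mul trmxK.
  by rewrite mulmxKpV // submxMl.
exists (u - x); first by rewrite mulmxBr Mx subrr.
have -> : u - (u - x) = P^T *m (M *m u).
  by rewrite opprB addrC subrK /x !trmx_mul !trmxK mulmxA.
exact: norm1_mul.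
Qed.

Lemma supported_coercive {m n : nat} (M : 'M[R]_(m, n)) (S : {set 'I_n}) :
  (forall w, supported w S -> M *m w = 0 -> w = 0) ->
  exists2 C, 0 <= C & forall u, supported u S -> norm1 u <= C * norm1 (M *m u).
Proof.
move=> kerS; have [C C_ge0 approx] := kernel_approx (M *m maskmx S).
exists C => // u uS; have [k Mk le_uk] := approx u.
rewrite -mulmxA mul_maskmx mask_id // in le_uk.
have k0 : mask S k = 0.
  by apply: kerS; [exact: mask_supported | rewrite -mul_maskmx mulmxA].
have u_eq : mask S (u - k) = u by rewrite maskB k0 subr0 mask_id.
by rewrite -{1}u_eq; apply: le_trans (norm1_mask S (u - k)) le_uk.
Qed.

(* Slide [u] along the kernel direction [w] until a first coordinate vanishes;
   as the entries of [w] have nonnegative sum, the l1 norm does not decrease. *)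
Lemma shift_to_face {m n : nat} (M : 'M[R]_(m, n)) (S : {set 'I_n})
    (w u : 'cV[R]_n) j1 :
  supported w S -> M *m w = 0 -> 0 <= \sum_i w i 0 -> w j1 0 < 0 ->
  nonneg u -> supported u S ->
  exists j, j \in S /\ exists u', [/\ nonneg u', supported u' (S :\ j),
    M *m u' = M *m u & norm1 u <= norm1 u'].
Proof.
move=> wS Mw sumw_ge0 wj1 u_ge0 uS.
have [j0 wj0 j0_min] :=
  @arg_minP _ _ _ j1 (fun j => w j 0 < 0) (fun j => u j 0 / - w j 0) wj1.
set t := u j0 0 / - w j0 0.
have t_ge0 : 0 <= t by rewrite divr_ge0 // oppr_ge0 ltW.
have u'_ge0 : nonneg (u + t *: w).
  move=> i; rewrite !mxE; case: (leP 0 (w i 0)) => wi.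
    by rewrite addr_ge0 // mulr_ge0.
  have := j0_min i wi; rewrite -/t ler_pdivlMr ?oppr_gt0 // mulrN; lra.
exists j0; split; first by apply: contraT => /wS wj0_eq0; rewrite wj0_eq0 ltxx in wj0.
exists (u + t *: w); split => //.
- move=> i; rewrite !mxE in_setD1 negb_and negbK => /orP[/eqP -> | iNS].
    by rewrite /t invrN mulrN mulNr -mulrA mulVf ?mulr1 ?subrr // lt_eqF.
  by rewrite uS // wS // mulr0 addr0.
- by rewrite mulmxDr -scalemxAr Mw scaler0 addr0.
rewrite !norm1_nonneg //; under [X in _ <= X]eq_bigr do rewrite !mxE.
by rewrite big_split /= -mulr_sumr lerDl mulr_ge0.
Qed.

Lemma balanced_kernel_vector {m n : nat} (M : 'M[R]_(m, n)) (S : {set 'I_n})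
    (w0 : 'cV[R]_n) :
  (forall w, nonneg w -> supported w S -> M *m w = 0 -> w = 0) ->
  supported w0 S -> M *m w0 = 0 -> w0 != 0 ->
  exists2 w, [/\ supported w S, M *m w = 0 & 0 <= \sum_i w i 0] &
    exists j, w j 0 < 0.
Proof.
move=> nonneg_kerS w0S Mw0 w0_neq0.
pose w := if 0 <= \sum_i w0 i 0 then w0 else - w0.
have wS : supported w S.
  by move=> i /w0S wi0; rewrite /w; case: ifP; rewrite ?mxE wi0 ?oppr0.
have Mw : M *m w = 0 by rewrite /w; case: ifP; rewrite ?mulmxN Mw0 ?oppr0.
exists w; first split => //.
  rewrite /w; case: ifP => // /negbT; rewrite -ltNge => sum_lt0.
  by under eq_bigr do rewrite mxE; rewrite sumrN oppr_ge0 ltW.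
apply: contrapT => no_neg.
have w_eq0 : w = 0.
  apply: nonneg_kerS => // i; rewrite leNgt; apply/negP => wi.
  by apply: no_neg; exists i.
by move: w_eq0; rewrite /w; case: ifP => _ /eqP; rewrite ?oppr_eq0 (negPf w0_neq0).
Qed.

Lemma nonneg_coercive {m n : nat} (M : 'M[R]_(m, n)) (S : {set 'I_n}) :
  (forall w, nonneg w -> supported w S -> M *m w = 0 -> w = 0) ->
  exists2 C, 0 <= C & forall u, nonneg u -> supported u S ->
    norm1 u <= C * norm1 (M *m u).
Proof.
have [k] := ubnP #|S|; elim: k S => // k IH S card_S nonneg_kerS.
have [[w0 [w0S Mw0 w0_neq0]] | no_ker] :=
  pselect (exists w, [/\ supported w S, M *m w = 0 & w != 0]); last first.
  have [|C C_ge0 HC] := supported_coercive M S; last by exists C => // u _ /HC.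
  move=> w wS Mw; apply/eqP; apply: contrapT => /negP w_neq0.
  by apply: no_ker; exists w.
have [w [wS Mw sumw_ge0] [j1 wj1]] :=
  balanced_kernel_vector M S w0 nonneg_kerS w0S Mw0 w0_neq0.
pose P j C := j \in S -> forall u, nonneg u -> supported u (S :\ j) ->
  norm1 u <= C * norm1 (M *m u).
have P_mono j C C' : C <= C' -> P j C -> P j C'.
  move=> le_CC' HC jS u u_ge0 uS; apply: le_trans (HC jS u u_ge0 uS) _.
  by rewrite ler_wpM2r ?norm1_ge0.
have P_ex j : exists2 C, 0 <= C & P j C.
  case: (boolP (j \in S)) => jS; last by exists 0 => // /(negP jS).
  have [||C C_ge0 HC] := IH (S :\ j).
  + by rewrite (cardsD1 j S) jS in card_S.
  + move=> w' w'_ge0 w'S; apply: nonneg_kerS => // i iNS.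
    by apply: w'S; rewrite in_setD1 negb_and iNS orbT.
  + by exists C => // _.
have [C C_ge0 HC] := uniform_constant P_mono P_ex.
exists C => // u u_ge0 uS.
have [j [jS [u' [u'_ge0 u'S Mu' le_uu']]]] :=
  shift_to_face M S w u j1 wS Mw sumw_ge0 wj1 u_ge0 uS.
by rewrite -Mu'; apply: le_trans le_uu' (HC j jS u' u'_ge0 u'S).
Qed.

End NonnegCoercivity.

Lemma kermx_tr_rank1 {F : fieldType} {n : nat} (A : 'M[F]_n) (c : 'cV[F]_n) :
  c != 0 -> (forall v, A *m v = 0 <-> exists t, v = t *: c) ->
  \rank (kermx A^T) = 1%N.
Proof.
move=> c_neq0 kerA; have Ac : A *m c = 0 by apply/kerA; exists 1; rewrite scale1r.
suff -> : \rank (kermx A^T) = \rank c^T by rewrite rank_rV trmx_eq0 c_neq0.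
apply: eqmx_rank; apply/andP; split; last first.
  by apply/sub_kermxP; rewrite -trmx_mul Ac trmx0.
apply/row_subP => i; have /sub_kermxP Ai := row_sub i (kermx A^T).
have [t rowE] : exists t, (row i (kermx A^T))^T = t *: c.
  by apply/kerA; apply: trmx_inj; rewrite trmx_mul trmxK Ai trmx0.
by rewrite -[row i _]trmxK rowE linearZ /= scalemx_sub.
Qed.

Section EuclideanNorm.
Context {R : realType}.

Lemma enorm_cV {n : nat} (v : 'cV[R]_n) : enorm v = Num.sqrt (\sum_i v i 0 ^+ 2).
Proof. by rewrite /enorm; congr Num.sqrt; apply: eq_bigr => i _; rewrite big_ord1. Qed.

Lemma enorm_ge0 {m n : nat} (M : 'M[R]_(m, n)) : 0 <= enorm M.
Proof. exact: sqrtr_ge0. Qed.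

Lemma enorm0 {m n : nat} : enorm (0 : 'M[R]_(m, n)) = 0.
Proof.
by rewrite /enorm big1 ?sqrtr0 // => i _; rewrite big1 // => j _; rewrite mxE expr0n.
Qed.

Lemma enorm_eq1_neq0 {m n : nat} {M : 'M[R]_(m, n)} : enorm M = 1 -> M != 0.
Proof. by apply: contra_eq_neq => ->; rewrite enorm0 eq_sym oner_neq0. Qed.

Lemma enorm_cV_sqr {n : nat} (v : 'cV[R]_n) : enorm v ^+ 2 = \sum_i v i 0 ^+ 2.
Proof. by rewrite enorm_cV sqr_sqrtr // sumr_ge0 // => i _; rewrite sqr_ge0. Qed.

Lemma enorm_gt0 {m n : nat} {M : 'M[R]_(m, n)} : M != 0 -> 0 < enorm M.
Proof.
case/matrix0Pn => i [j Mij]; rewrite sqrtr_gt0.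
apply: lt_le_trans (ler_sum_term (fun k => \sum_j M k j ^+ 2) i _); last first.
  by move=> k; apply: sumr_ge0 => l _; apply: sqr_ge0.
apply: lt_le_trans (ler_sum_term (fun l => M i l ^+ 2) j _).
  by rewrite exprn_even_gt0.
by move=> l; apply: sqr_ge0.
Qed.

Lemma enormZ {n : nat} (a : R) (v : 'cV[R]_n) : enorm (a *: v) = `|a| * enorm v.
Proof.
rewrite !enorm_cV -sqrtr_sqr -sqrtrM ?sqr_ge0 // mulr_sumr.
by congr Num.sqrt; apply: eq_bigr => i _; rewrite mxE exprMn.
Qed.

Lemma enorm_le_norm1 {n : nat} (v : 'cV[R]_n) : enorm v <= norm1 v.
Proof.
rewrite enorm_cV -(ger0_norm (norm1_ge0 v)) -sqrtr_sqr ler_sqrt ?sqr_ge0 //.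
rewrite expr2 mulr_suml; apply: ler_sum => i _.
rewrite -real_normK ?num_real // expr2 ler_wpM2l //.
exact: (ler_sum_term (fun j => `|v j 0|)).
Qed.

Lemma norm1_le_enorm {n : nat} (v : 'cV[R]_n) : norm1 v <= n%:R * enorm v.
Proof.
apply: norm1_le_const => i; rewrite enorm_cV -sqrtr_sqr ler_sqrt.
  by apply: (ler_sum_term (fun j => v j 0 ^+ 2)) => j; apply: sqr_ge0.
by apply: sumr_ge0 => j _; apply: sqr_ge0.
Qed.

Lemma enorm_mul_le {m n : nat} (M : 'M[R]_(m, n)) (v : 'cV[R]_n) :
  enorm (M *m v) <= mxnorm1 M * n%:R * enorm v.
Proof.
apply: le_trans (enorm_le_norm1 _) _; apply: le_trans (norm1_mul M v) _.
by rewrite -mulrA ler_wpM2l ?mxnorm1_ge0 ?norm1_le_enorm.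
Qed.

End EuclideanNorm.

Lemma card_lt_notin {T : finType} {S : {set T}} {x : T} : x \notin S -> (#|S| < #|T|)%N.
Proof.
move=> xNS; rewrite -cardsT proper_card // properT.
by apply: contraNneq xNS => ->; rewrite inE.
Qed.

Section KernelLine.
Context {R : realType} {n : nat}.

Definition nonzero_offdiag (A : 'M[R]_n) : Prop := forall i j, i != j -> A i j != 0.

Lemma subcfg_degenerate (A : 'M[R]_n) (S : {set 'I_n}) (v : 'cV[R]_n) :
  nonneg v -> v != 0 -> supported v S ->
  (forall i, i \in S -> (A *m v) i 0 = 0) -> degenerate_mx (subcfg_mx A S).
Proof.
move=> v_ge0 v_neq0 vS Av_S.
exists (\col_a v (enum_val a) 0); split; last split.
- have /matrix0Pn[i [j vij]] := v_neq0; rewrite (ord1 j) in vij.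
  have iS : i \in S by apply: contraT => /vS vi0; rewrite vi0 eqxx in vij.
  apply/eqP => /matrixP /(_ (enum_rank_in iS i) 0); rewrite !mxE enum_rankK_in //.
  by move/eqP; rewrite (negPf vij).
- by move=> a; rewrite mxE.
apply/matrixP => a j; rewrite (ord1 j) !mxE.
under eq_bigr do rewrite !mxE.
rewrite -(big_enum_val (fun x => A (enum_val a) x * v x 0)) /= big_mkcond /=.
rewrite -[RHS](Av_S (enum_val a) (enum_valP a)) mxE; apply: eq_bigr => x _.
by case: ifP => // /negbT /vS ->; rewrite mulr0.
Qed.

Context {A : 'M[R]_n}.
Hypotheses (A_mindeg : minimally_degenerate A) (A_offdiag : nonzero_offdiag A).

(* The support [S] of [v] is proper; it cannot have two or more points by
   minimality, nor a single point [i], as then [(A v) i0 = A i0 i * v i != 0]. *)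
Lemma nonneg_kernel_gt0 {v : 'cV[R]_n} :
  nonneg v -> v != 0 -> A *m v = 0 -> forall i, 0 < v i 0.
Proof.
move=> v_ge0 v_neq0 Av i0; rewrite lt_neqAle v_ge0 andbT eq_sym.
apply/negP => /eqP vi0.
pose S := [set i | v i 0 != 0].
have vS : supported v S by move=> i; rewrite inE negbK => /eqP.
have i0NS : i0 \notin S by rewrite inE negbK vi0.
have /matrix0Pn[i [j vij]] := v_neq0; rewrite (ord1 j) in vij.
have iS : i \in S by rewrite inE.
have card_S_lt : (#|S| < n)%N by have := card_lt_notin i0NS; rewrite card_ord.
have card_S_gt0 : (0 < #|S|)%N by apply/card_gt0P; exists i.
case: (leqP 2 #|S|) => [card_S_ge2 | card_S_lt2].
  apply: A_mindeg.2 card_S_ge2 card_S_lt _.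
  by apply: subcfg_degenerate v_ge0 v_neq0 vS _ => k _; rewrite Av mxE.
have /cards1P[k S_eq] : #|S| == 1%N by rewrite eqn_leq -ltnS card_S_lt2.
have /[!inE] vk : k \in S by rewrite S_eq set11.
have i0k : i0 != k by apply: contraNneq i0NS => ->; rewrite S_eq set11.
move/matrixP: Av => /(_ i0 0); rewrite !mxE (bigD1 k) //= big1 ?addr0.
  by move/eqP; rewrite mulf_eq0 (negPf (A_offdiag _ _ i0k)) (negPf vk).
by move=> l lk; rewrite vS ?mulr0 // S_eq in_set1.
Qed.

(* For a kernel vector [w], subtracting [t c] with [t = min w_j / c_j] leaves a
   nonnegative kernel vector with a zero entry, which must vanish. *)
Lemma kernel_line :
  exists c : 'cV[R]_n, (forall i, 0 < c i 0) /\ enorm c = 1 /\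
    (forall v : 'cV[R]_n, A *m v = 0 <-> exists t : R, v = t *: c).
Proof.
have [v0 [v0_neq0 [v0_ge0 Av0]]] := A_mindeg.1.
have v0_gt0 := nonneg_kernel_gt0 v0_ge0 v0_neq0 Av0.
have v0_norm_gt0 := enorm_gt0 v0_neq0.
pose c := (enorm v0)^-1 *: v0.
have c_gt0 i : 0 < c i 0 by rewrite mxE mulr_gt0 ?invr_gt0.
have Ac : A *m c = 0 by rewrite -scalemxAr Av0 scaler0.
have c_unit : enorm c = 1 by rewrite enormZ ger0_norm ?invr_ge0 ?ltW // mulVf // gt_eqF.
clearbody c; exists c; do 2!split => //.
move=> w; split => [Aw | [t ->]]; last by rewrite -scalemxAr Ac scaler0.
have /matrix0Pn[i1 _] := v0_neq0.
have [j0 _ j0_min] := @arg_minP _ _ _ i1 predT (fun j => w j 0 / c j 0) erefl.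
pose d := w - (w j0 0 / c j0 0) *: c.
have d_ge0 : nonneg d by move=> j; rewrite !mxE subr_ge0 -ler_pdivlMr // j0_min.
have Ad : A *m d = 0 by rewrite mulmxBr Aw -scalemxAr Ac scaler0 subrr.
have dj0 : d j0 0 = 0 by rewrite !mxE -mulrA mulVf ?gt_eqF // mulr1 subrr.
exists (w j0 0 / c j0 0); apply/eqP; rewrite -subr_eq0 -/d; apply: contraTT isT => d_neq0.
by have := nonneg_kernel_gt0 d_ge0 d_neq0 Ad j0; rewrite dj0 ltxx.
Qed.

End KernelLine.

Lemma positive_unit_span_eq {R : realType} {n : nat} (c c' : 'cV[R]_n) :
  (forall i, 0 < c i 0) -> (forall i, 0 < c' i 0) -> enorm c = 1 -> enorm c' = 1 ->
  (exists t, c' = t *: c) -> c' = c.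
Proof.
move=> c_gt0 c'_gt0 c_unit c'_unit [t c'E].
have /matrix0Pn[i [j _]] := enorm_eq1_neq0 c_unit.
have t_gt0 : 0 < t by have := c'_gt0 i; rewrite c'E mxE pmulr_lgt0.
by move: c'_unit; rewrite c'E enormZ c_unit mulr1 gtr0_norm // => t1; rewrite t1 scale1r.
Qed.

Section KernelDeviation.
Context {R : realType} {n : nat}.

(* With [a = <u, c>]: [|u - s c|^2 = (1 - a^2) + (s - a)^2] and
   [|u - c|^2 = 2 (1 - a)], while [0 <= a <= 1]. *)
Lemma enorm_sub_unit_le (u c : 'cV[R]_n) (s : R) :
  enorm u = 1 -> enorm c = 1 -> 0 <= \sum_i u i 0 * c i 0 ->
  enorm (u - c) <= 2 * enorm (u - s *: c).
Proof.
move=> u_unit c_unit; set a := \sum_i _ => a_ge0.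
have sqrE r : enorm (u - r *: c) ^+ 2 = 1 - 2 * r * a + r ^+ 2.
  transitivity (\sum_i u i 0 ^+ 2 - 2 * r * a + r ^+ 2 * \sum_i c i 0 ^+ 2).
    rewrite enorm_cV_sqr /a !mulr_sumr -sumrB -big_split /=.
    by apply: eq_bigr => i _; rewrite !mxE; ring.
  by rewrite -!enorm_cV_sqr u_unit c_unit expr1n mulr1.
have a_le1 : a <= 1.
  by have := sqr_ge0 (enorm (u - a *: c)); rewrite sqrE; nra.
have := sqrE s; have := sqrE 1; rewrite scale1r expr1n mulr1 => E1 Es.
rewrite -(ler_pXn2r (_ : 0 < 2)%N) ?nnegrE ?mulr_ge0 ?enorm_ge0 // exprMn E1 Es.
by have := sqr_ge0 (s - a); nra.
Qed.

Lemma unit_kernel_deviation {A : 'M[R]_n} {c : 'cV[R]_n} :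
  nonneg c -> enorm c = 1 -> (forall v, A *m v = 0 <-> exists t, v = t *: c) ->
  exists C1 C2 : R, 0 < C1 /\ 0 < C2 /\ forall u, nonneg u -> enorm u = 1 ->
    C1 * enorm (A *m u) <= enorm (u - c) /\ enorm (u - c) <= C2 * enorm (A *m u).
Proof.
move=> c_ge0 c_unit kerA; have Ac : A *m c = 0 by apply/kerA; exists 1; rewrite scale1r.
have [Ck Ck_ge0 approx] := kernel_approx A.
have K_ge0 : 0 <= mxnorm1 A * n%:R by rewrite mulr_ge0 ?mxnorm1_ge0.
have Ckn_ge0 : 0 <= Ck * n%:R by rewrite mulr_ge0.
exists (mxnorm1 A * n%:R + 1)^-1, (2 * (Ck * n%:R) + 1).
split; first by rewrite invr_gt0 ltr_wpDl.
split; first by rewrite ltr_wpDl ?mulr_ge0.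
move=> u u_ge0 u_unit; split.
  rewrite mulrC ler_pdivrMr ?ltr_wpDl //.
  have -> : A *m u = A *m (u - c) by rewrite mulmxBr Ac subr0.
  apply: le_trans (enorm_mul_le _ _) _.
  by rewrite mulrC ler_wpM2l ?enorm_ge0 // lerDl.
have [k Ak le_uk] := approx u; have [s kE] := (kerA k).1 Ak.
have le_us : enorm (u - s *: c) <= Ck * n%:R * enorm (A *m u).
  rewrite -kE; apply: le_trans (enorm_le_norm1 _) _; apply: le_trans le_uk _.
  by rewrite -mulrA ler_wpM2l // norm1_le_enorm.
apply: le_trans (enorm_sub_unit_le _ _ s u_unit c_unit _) _.
  by apply: sumr_ge0 => i _; rewrite mulr_ge0.
by have := enorm_ge0 (A *m u); nra.
Qed.

Lemma kernel_deviation (A : 'M[R]_n) (c : 'cV[R]_n) :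
  nonneg c -> enorm c = 1 -> (forall v, A *m v = 0 <-> exists t, v = t *: c) ->
  exists C1 C2 : R, 0 < C1 /\ 0 < C2 /\
    forall l : 'cV[R]_n, l != 0 -> (forall i, 0 <= l i 0) ->
      C1 * (enorm (A *m l) / enorm l) <= enorm ((enorm l)^-1 *: l - c) /\
      enorm ((enorm l)^-1 *: l - c) <= C2 * (enorm (A *m l) / enorm l).
Proof.
move=> c_ge0 c_unit kerA.
have [C1 [C2 [C1_gt0 [C2_gt0 dev]]]] := unit_kernel_deviation c_ge0 c_unit kerA.
exists C1, C2; split=> //; split=> // l l_neq0 l_ge0.
have inv_ge0 : 0 <= (enorm l)^-1 by rewrite invr_ge0 enorm_ge0.
have -> : enorm (A *m l) / enorm l = enorm (A *m ((enorm l)^-1 *: l)).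
  by rewrite -scalemxAr enormZ ger0_norm // mulrC.
apply: dev; first by move=> i; rewrite mxE mulr_ge0.
by rewrite enormZ ger0_norm // mulVf ?gt_eqF ?enorm_gt0.
Qed.

End KernelDeviation.

Section LargestEntries.
Context {R : realType} {n : nat}.

Lemma lmax_ge (l : 'cV[R]_n) i : l i 0 <= lmax l.
Proof. by rewrite /lmax (bigD1 i) //= le_max lexx. Qed.

Lemma lmax_eq0_or_attained (l : 'cV[R]_n) : lmax l = 0 \/ exists i, lmax l = l i 0.
Proof.
rewrite /lmax; elim/big_ind: _ => [|x y hx hy|i _]; [by left | | by right; exists i].
by rewrite maxEle; case: ifP.
Qed.

Lemma card_ge_lmax2 (l : 'cV[R]_n) :
  0 < lmax2 l -> (2 <= #|[set i | (lmax2 l <= l i 0)%R]|)%N.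
Proof.
rewrite /lmax2; set s := [seq l i 0 | i <- enum 'I_n].
set ge := fun x y : R => y <= x.
have ge_total : total ge by move=> x y; rewrite /ge orbC le_total.
have sorted_s := sort_sorted ge_total s.
have perm_s : perm_eq (sort ge s) s by rewrite perm_sort perm_refl.
set b := nth 0 _ 1.
have -> : #|[set i | b <= l i 0]| = count (fun x => b <= x) s.
  rewrite count_map cardsE cardE /enum_mem size_filter /= count_filter.
  by apply: eq_count => x /=; rewrite andbT.
rewrite -(permP perm_s) /b; move: sorted_s.
case: (sort ge s) => [|x0 [|x1 r]] /=; rewrite ?ltxx // => /andP[x1_le _] _.
by move: x1_le; rewrite /ge lexx => ->.
Qed.

End LargestEntries.

Lemma uniform_subcfg_coercive {R : realType} {n : nat} {A : 'M[R]_n} :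
  (forall S : {set 'I_n}, (2 <= #|S|)%N -> (#|S| < n)%N ->
     ~ degenerate_mx (subcfg_mx A S)) ->
  exists2 Cg, 0 <= Cg & forall L : {set 'I_n}, (2 <= #|L|)%N -> (#|L| < n)%N ->
    forall u, nonneg u -> supported u L -> norm1 u <= Cg * norm1 (mask L (A *m u)).
Proof.
move=> nondeg; apply: uniform_constant => [L C C' le_CC' HC L_ge2 L_lt u u_ge0 uL | L].
  by apply: le_trans (HC L_ge2 L_lt u u_ge0 uL) _; rewrite ler_wpM2r ?norm1_ge0.
have [[L_ge2 L_lt] | L_bad] := pselect ((2 <= #|L|)%N /\ (#|L| < n)%N); last first.
  by exists 0 => // L_ge2 L_lt; case: L_bad.
have [|C C_ge0 HC] := nonneg_coercive (maskmx L *m A) L.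
  move=> w w_ge0 wL Aw; apply/eqP; apply: contraT => w_neq0.
  case: (nondeg L L_ge2 L_lt); apply: subcfg_degenerate w_ge0 w_neq0 wL _ => i iL.
  by move/matrixP: Aw => /(_ i 0); rewrite -mulmxA mul_maskmx !mxE iL.
by exists C => // _ _ u u_ge0 uL; rewrite -mul_maskmx mulmxA; apply: HC.
Qed.

Section PeakConcentration.
Context {R : realType} {n : nat} {A : 'M[R]_n} {Cg : R}.
Hypothesis Cg_ge0 : 0 <= Cg.
Hypothesis coercive : forall L : {set 'I_n}, (2 <= #|L|)%N -> (#|L| < n)%N ->
  forall u, nonneg u -> supported u L -> norm1 u <= Cg * norm1 (mask L (A *m u)).
Context {eta V : R} {L : {set 'I_n}} {nu : 'cV[R]_n}.
Hypotheses (eta_ge0 : 0 <= eta) (eta_small : Cg * mxnorm1 A * n%:R * eta <= 1 / 2).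
Hypothesis L_ge2 : (2 <= #|L|)%N.
Hypotheses (nu_ge0 : nonneg nu) (nu_le : forall i, nu i 0 <= V).
Hypotheses (peak : exists2 i, i \in L & V <= nu i 0)
  (nu_small : forall i, i \notin L -> nu i 0 <= eta * V).

Let V_ge0 : 0 <= V.
Proof. by have [i _ _] := peak; apply: le_trans (nu_le i). Qed.

(* The coordinates of [nu] off [L] are too small to cancel, in [A nu], the
   contribution of the peak, which is bounded below through [coercive]. *)
Lemma peak_le_masked_image : (#|L| < n)%N -> V <= 2 * Cg * norm1 (mask L (A *m nu)).
Proof.
move=> L_lt; have [i iL Vi] := peak.
have mask_ge0 : nonneg (mask L nu) by move=> j; rewrite mxE; case: ifP.
have V_le : V <= norm1 (mask L nu).
  apply: le_trans Vi (le_trans _ (ler_sum_term (fun j => `|mask L nu j 0|) i _)) => //.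
  by rewrite mxE iL ger0_norm.
have tail_le : norm1 (nu - mask L nu) <= n%:R * (eta * V).
  apply: norm1_le_const => j; rewrite !mxE; case: ifP => jL.
    by rewrite subrr normr0 mulr_ge0.
  by rewrite subr0 ger0_norm ?nu_small ?jL.
have image_le : norm1 (mask L (A *m mask L nu))
    <= norm1 (mask L (A *m nu)) + mxnorm1 A * norm1 (nu - mask L nu).
  have -> : mask L (A *m mask L nu) = mask L (A *m nu) - mask L (A *m (nu - mask L nu)).
    by rewrite -maskB mulmxBr opprB addrC subrK.
  apply: le_trans (norm1B _ _) _.
  by rewrite lerD2l (le_trans (norm1_mask _ _) (norm1_mul _ _)).
have := coercive _ L_ge2 L_lt _ mask_ge0 (mask_supported L nu).
have := ler_wpM2l Cg_ge0 image_le.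
have := ler_wpM2l (mulr_ge0 Cg_ge0 (mxnorm1_ge0 A)) tail_le.
have := ler_wpM2r V_ge0 eta_small.
lra.
Qed.

Lemma image_le_masked_image :
  enorm (A *m nu) <= (2 * Cg * mxnorm1 A * n%:R ^+ 2 + 1) * enorm (mask L (A *m nu)).
Proof.
have Q_ge0 : 0 <= 2 * Cg * mxnorm1 A * n%:R ^+ 2 by rewrite !mulr_ge0 ?mxnorm1_ge0.
have [L_lt | L_full] := ltnP #|L| n; last first.
  rewrite mask_id => [|i iNL]; first by rewrite mulrDl mul1r lerDr mulr_ge0 ?enorm_ge0.
  by have := card_lt_notin iNL; rewrite card_ord ltnNge L_full.
have image_le : enorm (A *m nu) <= mxnorm1 A * (n%:R * V).
  apply: le_trans (enorm_le_norm1 _) (le_trans (norm1_mul _ _) _).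
  by rewrite ler_wpM2l ?mxnorm1_ge0 // norm1_le_const // => i; rewrite ger0_norm.
have K_ge0 : 0 <= mxnorm1 A * n%:R by rewrite mulr_ge0 ?mxnorm1_ge0.
have := ler_wpM2l K_ge0 (peak_le_masked_image L_lt).
have := ler_wpM2l (mulr_ge0 (mulr_ge0 (ler0n _ 2) Cg_ge0) K_ge0)
  (norm1_le_enorm (mask L (A *m nu))).
have := enorm_ge0 (mask L (A *m nu)).
lra.
Qed.

End PeakConcentration.

Section WeightedSums.
Context {R : realType} {n : nat}.

Lemma weighted_sum_le (w : 'I_n -> R) (y : 'cV[R]_n) (b : R) :
  (forall i, w i <= b) -> \sum_i w i * y i 0 ^+ 2 <= b * enorm y ^+ 2.
Proof.
move=> w_le; rewrite enorm_cV_sqr mulr_sumr; apply: ler_sum => i _.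
by rewrite ler_wpM2r ?sqr_ge0.
Qed.

Lemma weighted_sum_ge (w : 'I_n -> R) (y : 'cV[R]_n) (L : {set 'I_n}) (b : R) :
  (forall i, 0 <= w i) -> (forall i, i \in L -> b <= w i) ->
  b * enorm (mask L y) ^+ 2 <= \sum_i w i * y i 0 ^+ 2.
Proof.
move=> w_ge0 w_ge; rewrite enorm_cV_sqr mulr_sumr; apply: ler_sum => i _; rewrite mxE.
case: ifP => iL; first by rewrite ler_wpM2r ?sqr_ge0 ?w_ge.
by rewrite expr0n mulr0 mulr_ge0 ?sqr_ge0.
Qed.

End WeightedSums.

Lemma ler_powR_base {R : realType} {r x y : R} :
  0 <= r -> 0 <= x -> x <= y -> x `^ r <= y `^ r.
Proof.
move=> r_ge0 x_ge0 le_xy; apply: (ge0_ler_powR r_ge0) => //; rewrite nnegrE //.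
exact: le_trans le_xy.
Qed.

Lemma small_positive {R : realType} {K d : R} : 0 <= K -> 0 < d ->
  exists eta : R, [/\ 0 < eta, eta <= d, eta <= 1 & K * eta <= 1 / 2].
Proof.
move=> K_ge0 d_gt0; have K2_gt0 : 0 < 2 * (K + 1) by rewrite mulr_gt0 ?ltr_wpDl.
exists (Num.min (Num.min d 1) (2 * (K + 1))^-1); set eta := Num.min _ _.
have eta_le : eta <= (2 * (K + 1))^-1 by rewrite ge_min lexx orbT.
have eta_gt0 : 0 < eta by rewrite !lt_min d_gt0 ltr01 invr_gt0.
split; rewrite ?ge_min ?lexx ?orbT //.
by move: eta_le; rewrite -div1r ler_pdivlMr //; nra.
Qed.

Lemma image_vpow_concentrates {R : realType} {n : nat} {A : 'M[R]_n} {Cg : R}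
    {D eta : R} {lam : 'cV[R]_n} {imax : 'I_n} :
  0 <= Cg ->
  (forall L : {set 'I_n}, (2 <= #|L|)%N -> (#|L| < n)%N ->
     forall u, nonneg u -> supported u L -> norm1 u <= Cg * norm1 (mask L (A *m u))) ->
  1 <= D -> 0 < eta -> eta <= 1 -> Cg * mxnorm1 A * n%:R * eta <= 1 / 2 ->
  (forall i, 0 < lam i 0) -> lmax lam = lam imax 0 ->
  let L := [set i | eta * lmax lam <= lam i 0] in (2 <= #|L|)%N ->
  enorm (A *m vpow lam D)
    <= (2 * Cg * mxnorm1 A * n%:R ^+ 2 + 1) * enorm (mask L (A *m vpow lam D)).
Proof.
move=> Cg_ge0 coercive D_ge1 eta_gt0 eta_le1 eta_small lam_gt0 mE L L_ge2.
have D_ge0 : 0 <= D by lra.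
have m_gt0 : 0 < lmax lam by rewrite mE.
have nuE i : vpow lam D i 0 = lam i 0 `^ D by rewrite mxE.
apply: (image_le_masked_image (V := lmax lam `^ D) Cg_ge0 coercive (ltW eta_gt0)
  eta_small L_ge2) => [i | i | | i].
- by rewrite nuE powR_ge0.
- by rewrite nuE ler_powR_base ?lmax_ge // ltW.
- by exists imax; [rewrite inE -mE ger_pMl | rewrite nuE -mE].
rewrite inE -ltNge nuE => lam_lt.
apply: le_trans (ler_powR_base D_ge0 (ltW (lam_gt0 i)) (ltW lam_lt)) _.
rewrite powRM ?(ltW eta_gt0) ?(ltW m_gt0) //.
by rewrite ler_wpM2r ?powR_ge0 // ge1r_powR ?eta_gt0.
Qed.

(* Taking [eta <= d1] keeps the index of [lmax2] in [L], so [L] has at least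
   two points. *)
Lemma weighted_image_comparable {R : realType} {n : nat} (A : 'M[R]_n) (D : R) :
  1 <= D ->
  (forall S : {set 'I_n}, (2 <= #|S|)%N -> (#|S| < n)%N ->
     ~ degenerate_mx (subcfg_mx A S)) ->
  forall d1 : R, 0 < d1 ->
  exists C1 C2 : R, 0 < C1 /\ 0 < C2 /\
  forall lam : 'cV[R]_n, (forall i, 0 < lam i 0) -> d1 * lmax lam <= lmax2 lam ->
    let S := \sum_(i < n) powR (lam i 0) (2 * D - 2) * (A *m vpow lam D) i 0 ^+ 2 in
    let T := powR (lmax lam) (2 * D - 2) * enorm (A *m vpow lam D) ^+ 2 in
    C1 * T <= S /\ S <= C2 * T.
Proof.
move=> D_ge1 nondeg d1 d1_gt0.
have [Cg Cg_ge0 coercive] := uniform_subcfg_coercive nondeg.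
have [eta [eta_gt0 eta_le_d1 eta_le1 eta_small]] :=
  small_positive (mulr_ge0 (mulr_ge0 Cg_ge0 (mxnorm1_ge0 A)) (ler0n _ n)) d1_gt0.
set p := 2 * D - 2; have p_ge0 : 0 <= p by rewrite /p; lra.
set Q := 2 * Cg * mxnorm1 A * n%:R ^+ 2 + 1.
have Q_gt0 : 0 < Q by rewrite ltr_wpDl ?mulr_ge0 ?mxnorm1_ge0.
exists (eta `^ p / Q ^+ 2), 1; split; first by rewrite divr_gt0 ?powR_gt0 ?exprn_gt0.
split=> // lam lam_gt0 lam2_ge S T.
have [m_eq0 | [imax mE]] := lmax_eq0_or_attained lam.
  have no_index (i : 'I_n) : False by have := lmax_ge lam i; rewrite m_eq0 leNgt lam_gt0.
  have -> : S = 0 by rewrite /S big1 // => i; case: (no_index i).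
  have -> : T = 0.
    by rewrite /T /enorm big1 ?sqrtr0 ?expr0n ?mulr0 // => i; case: (no_index i).
  by rewrite !mulr0.
have m_gt0 : 0 < lmax lam by rewrite mE.
pose L := [set i | eta * lmax lam <= lam i 0]; set y := A *m vpow lam D.
have L_ge2 : (2 <= #|L|)%N.
  have lam2_gt0 : 0 < lmax2 lam by apply: lt_le_trans lam2_ge; rewrite mulr_gt0.
  apply: leq_trans (card_ge_lmax2 lam lam2_gt0) (subset_leq_card _).
  apply/subsetP => i; rewrite !inE => le_lam2; apply: le_trans le_lam2.
  by apply: le_trans _ lam2_ge; rewrite ler_pM2r.
have y_le : enorm y <= Q * enorm (mask L y) := image_vpow_concentrates
  Cg_ge0 coercive D_ge1 eta_gt0 eta_le1 eta_small lam_gt0 mE L_ge2.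
have S_ge : (eta * lmax lam) `^ p * enorm (mask L y) ^+ 2 <= S.
  rewrite /S; apply: weighted_sum_ge => [i | i]; first exact: powR_ge0.
  by rewrite inE; apply: ler_powR_base; rewrite // mulr_ge0 // ltW.
have S_le : S <= lmax lam `^ p * enorm y ^+ 2.
  rewrite /S; apply: weighted_sum_le => i.
  exact: ler_powR_base p_ge0 (ltW (lam_gt0 i)) (lmax_ge lam i).
split; last by rewrite mul1r; exact: S_le.
apply: le_trans S_ge; rewrite powRM ?(ltW eta_gt0) ?(ltW m_gt0) // /T.
have y_sqr_le : enorm y ^+ 2 <= Q ^+ 2 * enorm (mask L y) ^+ 2.
  by rewrite -exprMn !expr2 ler_pM ?enorm_ge0.
have -> : eta `^ p * lmax lam `^ p * enorm (mask L y) ^+ 2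
    = eta `^ p / Q ^+ 2 * (lmax lam `^ p * (Q ^+ 2 * enorm (mask L y) ^+ 2)).
  by field; rewrite gt_eqF.
by rewrite ler_wpM2l ?divr_ge0 ?powR_ge0 ?sqr_ge0 // ler_wpM2l ?powR_ge0.
Qed.

Lemma Astar_offdiag {R : realType} {N J : nat} (k0 kinf : R)
    (iota : 'I_J -> R) (z : 'I_J -> 'rV[R]_N) :
  0 < k0 -> 0 < kinf -> (forall i, iota i = 1 \/ iota i = -1) -> injective z ->
  nonzero_offdiag (Astar k0 kinf iota z).
Proof.
move=> k0_gt0 kinf_gt0 iota_pm1 z_inj i j ij; rewrite mxE (negPf ij).
have iota_neq0 k : iota k != 0 by case: (iota_pm1 k) => ->; rewrite ?oppr_eq0 oner_eq0.
have zij_gt0 : 0 < enorm (z i - z j).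
  by apply: enorm_gt0; rewrite subr_eq0; apply: contra ij => /eqP/z_inj ->.
by rewrite !mulf_neq0 ?iota_neq0 ?gt_eqF // invr_gt0 exprn_gt0.
Qed.

Lemma Dexp_ge1 {R : realType} {N : nat} : (4 <= N)%N -> 1 <= Dexp R N.
Proof.
move=> N_ge4; rewrite /Dexp ler_pdivlMr // mul1r lerBrDr -natrD ler_nat.
exact: leq_trans N_ge4.
Qed.

Theorem lemma4p5 (R : realType) (N J : nat) (k0 kinf : R)
  (iota : 'I_J -> R) (z : 'I_J -> 'rV[R]_N) :
  (7 <= N)%N -> 0 < k0 -> 0 < kinf ->
  (forall i, iota i = 1 \/ iota i = -1) ->
  injective z ->
  minimally_degenerate (Astar k0 kinf iota z) ->
  let A := Astar k0 kinf iota z in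
  let D := Dexp R N in
  (\rank (kermx A^T) = 1)%N /\
  exists c : 'cV[R]_J,
    ((forall i, 0 < c i 0) /\ enorm c = 1 /\
     (forall v : 'cV[R]_J, A *m v = 0 <-> exists t : R, v = t *: c)) /\
    (forall c' : 'cV[R]_J,
       (forall i, 0 < c' i 0) -> enorm c' = 1 ->
       (forall v : 'cV[R]_J, A *m v = 0 <-> exists t : R, v = t *: c') ->
       c' = c) /\
    (exists C1 C2 : R, 0 < C1 /\ 0 < C2 /\
      forall l : 'cV[R]_J, l != 0 -> (forall i, 0 <= l i 0) ->
        C1 * (enorm (A *m l) / enorm l) <= enorm ((enorm l)^-1 *: l - c) /\
        enorm ((enorm l)^-1 *: l - c) <= C2 * (enorm (A *m l) / enorm l)) /\
    (forall d1 : R, 0 < d1 ->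
      exists C1 C2 : R, 0 < C1 /\ 0 < C2 /\
      forall lam : 'cV[R]_J, (forall i, 0 < lam i 0) ->
        d1 * lmax lam <= lmax2 lam ->
        let S := \sum_(i < J) powR (lam i 0) (2 * D - 2) * (A *m vpow lam D) i 0 ^+ 2 in
        let T := powR (lmax lam) (2 * D - 2) * enorm (A *m vpow lam D) ^+ 2 in
        C1 * T <= S /\ S <= C2 * T).
Proof.
move=> N_ge7 k0_gt0 kinf_gt0 iota_pm1 z_inj A_mindeg A D.
have A_offdiag : nonzero_offdiag A by exact: Astar_offdiag.
have [c [c_gt0 [c_unit kerA]]] := kernel_line A_mindeg A_offdiag.
have c_ge0 : nonneg c by move=> i; apply: ltW.
split; first exact: kermx_tr_rank1 (enorm_eq1_neq0 c_unit) kerA.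
exists c; split=> //; split.
  move=> c' c'_gt0 c'_unit kerA'; apply: positive_unit_span_eq => //.
  by apply/kerA/kerA'; exists 1; rewrite scale1r.
split; first exact: kernel_deviation c_ge0 c_unit kerA.
exact: weighted_image_comparable (Dexp_ge1 (leq_trans _ N_ge7)) A_mindeg.2.
Qed.
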